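(* Let $\sigma'\in\Sigma'$. Then there exists a generator $N'\in\mathrm{End}(H'_{\mathbb{Q}})$ of $\sigma'$ such that $\exp(N')\in\Gamma'$, and $\mathrm{Ad}(\gamma)\sigma'\in\Sigma'$ for every $\gamma\in\Gamma'$. Therefore $\Gamma'$ is strongly compatible with $\Sigma'$.
   Context: $H_{\mathbb{Z}}$ is a lattice with a unipotent automorphism $T$, $N=\log T$. $H'_{\mathbb{Z}}=H_{\mathbb{Z}}\oplus\mathbb{Z}e$ (an extension of $\mathbb{Z}$ by $H_{\mathbb{Z}}$, with $e$ mapping to $1$). $\Gamma'$ is the group of automorphisms of $H'_{\mathbb{Z}}$ of the form $\begin{pmatrix}T^n&b\\0&1\end{pmatrix}$ with $n\in\mathbb{Z}$, $b\in H_{\mathbb{Z}}$ (block form with respect to $H_{\mathbb{Z}}\oplus\mathbb{Z}e$). $\Sigma'$ is the set of cones $\mathbb{R}_{\ge0}N'$ where $N'\in\mathrm{End}(H'_{\mathbb{Q}})$, $N'|_{H_{\mathbb{Q}}}=N$, and $N'(e)=N(a)$ for some $a\in H_{\mathbb{Q}}$ with $(T-I)a\in H_{\mathbb{Z}}$. For $\gamma\in\Gamma'$, $\mathrm{Ad}(\gamma)\sigma'=\gamma\sigma'\gamma^{-1}$. Strong compatibility of $\Gamma'$ with $\Sigma'$ means: $\Sigma'$ is stable under $\mathrm{Ad}(\Gamma')$ and each cone of $\Sigma'$ is generated by elements $N'$ with $\exp(N')\in\Gamma'$. *)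

From HB Require Import structures.
From mathcomp Require Import all_boot all_order all_algebra.
From mathcomp Require Import classical_sets reals.
Set Implicit Arguments. Unset Strict Implicit. Unset Printing Implicit Defensive.
Import Order.TTheory GRing.Theory Num.Theory.
Local Open Scope ring_scope.
Local Open Scope classical_set_scope.

(* The lattice H_Z is Z^n (column vectors); H'_Z = H_Z (+) Z e = Z^(n+1),
   with e the last basis vector.  Endomorphisms are (n+1)x(n+1) matrices
   acting on column vectors, block form w.r.t. H (+) Z e. *)

(* logarithm of a unipotent n x n matrix: the series terminates at (M-1)^n *)
Definition matlog (R : realType) (m : nat) (M : 'M[R]_m) : 'M[R]_m :=
  \sum_(1 <= k < m.+1) (((-1) ^+ k.+1) / k%:R) *: (M - 1%:M) ^+ k.

(* exponential of a nilpotent m x m matrix: the series terminates at A^m *)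
Definition matexp (R : realType) (m : nat) (A : 'M[R]_m) : 'M[R]_m :=
  \sum_(k < m.+1) (k`!%:R)^-1 *: A ^+ k.

Definition nilpotent_mx (R : realType) (m : nat) (A : 'M[R]_m) : Prop :=
  exists k : nat, A ^+ k = 0.

Definition powz (R : realType) (m : nat) (M : 'M[R]_m) (k : int) : 'M[R]_m :=
  match k with
  | Posz j => M ^+ j
  | Negz j => (invmx M) ^+ j.+1
  end.

Definition TR (R : realType) (n : nat) (T : 'M[int]_n) : 'M[R]_n :=
  map_mx (fun z : int => z%:~R) T.

Definition logT (R : realType) (n : nat) (T : 'M[int]_n) : 'M[R]_n :=
  matlog (TR R T).

Definition Gamma' (R : realType) (n : nat) (T : 'M[int]_n)
    (g : 'M[R]_(n + 1)) : Prop :=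
  exists (k : int) (b : 'cV[int]_n),
    g = block_mx (powz (TR R T) k) (map_mx (fun z : int => z%:~R) b) 0 1%:M.

Definition ray (R : realType) (m : nat) (A : 'M[R]_m) : set 'M[R]_m :=
  [set t *: A | t in [set t : R | 0 <= t]].

(* Sigma' : cones R_{>=0} N' with N'|_{H_Q} = N and N'(e) = N(a),
   a in H_Q with (T - I) a in H_Z. In block form N' = [[N, N a],[0,0]]. *)
Definition Sigma' (R : realType) (n : nat) (T : 'M[int]_n)
    (s : set 'M[R]_(n + 1)) : Prop :=
  exists a : 'cV[rat]_n,
    (forall i j, ((TR R T - 1%:M) *m map_mx (fun q : rat => ratr q) a) i j
                   \is a Num.int) /\
    s = ray (block_mx (logT R T) (logT R T *m map_mx (fun q : rat => ratr q) a)
                      0 0).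

Definition Ad (R : realType) (m : nat) (g : 'M[R]_m) (s : set 'M[R]_m)
  : set 'M[R]_m := [set g *m X *m invmx g | X in s].

Definition cone_gen (R : realType) (m : nat) (S : set 'M[R]_m) : set 'M[R]_m :=
  [set X | exists (p : nat) (c : 'I_p -> R) (v : 'I_p -> 'M[R]_m),
             (forall i, 0 <= c i /\ S (v i)) /\ X = \sum_(i < p) c i *: v i].

Definition exp_in (R : realType) (m : nat) (Gam : 'M[R]_m -> Prop)
    (N : 'M[R]_m) : Prop :=
  (exists Nq : 'M[rat]_m, N = map_mx (fun q : rat => ratr q) Nq) /\
  nilpotent_mx N /\ Gam (matexp N).

Definition strongly_compatible (R : realType) (m : nat)
    (Gam : 'M[R]_m -> Prop) (Sig : set 'M[R]_m -> Prop) : Prop :=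
  (forall s, Sig s -> forall g, Gam g -> Sig (Ad g s)) /\
  (forall s, Sig s -> exists S : set 'M[R]_m,
       (forall N, S N -> exp_in Gam N) /\ s = cone_gen S).

From HB Require Import structures.
From mathcomp Require Import all_boot all_order all_algebra.
From mathcomp Require Import classical_sets reals.
From mathcomp Require Import ring.

(* The cone of Sigma' attached to a is the ray through the nilpotent extension
   N' = [[N, N a], [0, 0]] of N = log T, and exp N' = [[exp N, (exp N - 1) a], [0, 1]]
   = [[T, (T - 1) a], [0, 1]], which lies in Gamma' because (T - 1) a is integral.
   That exp (log T) = T for unipotent T comes from the congruence
   exp (log (1 + X)) = 1 + X mod X^(m+1) between truncated series: their difference G
   vanishes at 0 and satisfies (1 + X) G' = G mod X^m, which kills its first m + 1
   coefficients.  Conjugating N' by [[T^k, b], [0, 1]] gives the extension of N by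
   T^k a - b, as T^k commutes with N, and (T - 1) (T^k a - b) = T^k (T - 1) a - (T - 1) b
   is again integral. *)

Set Implicit Arguments.
Unset Strict Implicit.
Unset Printing Implicit Defensive.
Import Order.TTheory GRing.Theory Num.Theory.
Local Open Scope ring_scope.
Local Open Scope classical_set_scope.

Section TruncatedLogExp.
Variable F : numFieldType.
Implicit Types p G : {poly F}.

Lemma dvdp_XnP j p : reflect (forall i, (i < j)%N -> p`_i = 0) ('X^j %| p).
Proof.
apply: (iffP idP) => [/dvdpP[q ->] i lt_ij | p_low]; first by rewrite coefMXn lt_ij.
rewrite -(poly_take_drop j p); suff -> : take_poly j p = 0 by rewrite add0r dvdp_mull.
by apply/polyP => i; rewrite coef_take_poly coef0; case: ifP => // /p_low.
Qed.

Lemma Xn_dvdp_ode m G :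
  G`_0 = 0 -> ('X^m %| (1 + 'X) * G^`() - G) -> 'X^(m.+1) %| G.
Proof.
move=> G0 /dvdp_XnP ode; apply/dvdp_XnP; elim=> // i IH lt_im.
have := ode i lt_im; rewrite coefB mulrDl mul1r coefD coefXM !coef_deriv.
rewrite IH ?(ltnW lt_im) // subr0; case: i IH lt_im => [|i] IH lt_im /=.
  by rewrite addr0 => /eqP; rewrite mulrn_eq0 => /eqP.
by rewrite IH ?(ltnW lt_im) // mul0rn addr0 => /eqP; rewrite mulrn_eq0 => /eqP.
Qed.

Definition trunc_log1p m : {poly F} :=
  \sum_(1 <= k < m.+1) ((-1) ^+ k.+1 / k%:R) *: 'X^k.

Definition trunc_exp M p : {poly F} := \sum_(k < M.+1) (k`!%:R)^-1 *: p ^+ k.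

Lemma X_dvdp_trunc_log1p m : 'X %| trunc_log1p m.
Proof.
rewrite /trunc_log1p big_nat_cond.
apply: (big_ind (fun p => 'X %| p)) => [||k /andP[/andP[k_gt0 _] _]].
- exact: dvdp0.
- exact: dvdp_add.
- by rewrite -mul_polyC dvdp_mull // -(subnK k_gt0) exprD dvdp_mull.
Qed.

Lemma deriv_trunc_log1p m : (1 + 'X) * (trunc_log1p m)^`() = 1 - (- 'X) ^+ m.
Proof.
have -> : 1 - (- 'X) ^+ m = - ((- 'X) ^+ m - 1) :> {poly F} by rewrite opprB.
rewrite subrX1 -mulNr opprB opprK addrC; congr (_ * _).
rewrite /trunc_log1p raddf_sum /= big_add1 /= big_mkord; apply: eq_bigr => i _.
rewrite derivZ derivXn /= -scaler_nat scalerA -mulrA mulVf ?pnatr_eq0 // mulr1.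
by rewrite !exprS mulN1r mulN1r opprK -exprZn scaleN1r.
Qed.

Lemma deriv_trunc_exp M p :
  (trunc_exp M p)^`() = p^`() * (trunc_exp M p - (M`!%:R)^-1 *: p ^+ M).
Proof.
rewrite /trunc_exp raddf_sum /= big_ord_recl /= derivZ deriv_exp mulr0n scaler0.
rewrite add0r big_ord_recr /= addrK mulr_sumr; apply: eq_bigr => i _.
rewrite derivZ deriv_exp /= /bump /= add1n add0n -scalerAr -scaler_nat scalerA.
by rewrite factS natrM invfM mulrAC mulVf ?pnatr_eq0 // mul1r.
Qed.

Lemma trunc_exp_log1p m M :
  (m <= M)%N -> 'X^(m.+1) %| trunc_exp M (trunc_log1p m) - (1 + 'X).
Proof.
move=> le_mM; set L := trunc_log1p m; set E := trunc_exp M L.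
have XL : 'X^M %| L ^+ M := dvdp_exp2r M (X_dvdp_trunc_log1p m).
apply: Xn_dvdp_ode.
  rewrite /E /trunc_exp coefB coef_sum big_ord_recl /= big1 => [|i _]; last first.
    by rewrite coefZ (dvdp_XnP _ _ (dvdp_exp2r i.+1 (X_dvdp_trunc_log1p m))) ?mulr0.
  by rewrite coefZ expr0 fact0 invr1 mul1r coefD coefX coef1 !addr0 subrr.
set c := (M`!%:R)^-1 *: L ^+ M.
have -> : (1 + 'X) * (E - (1 + 'X))^`() - (E - (1 + 'X)) =
          (1 + 'X) * L^`() * (E - c) - E.
  rewrite derivB derivD -[1]/(1%:P) derivC derivX add0r deriv_trunc_exp.
  by rewrite -/c -/E polyC1; ring.
rewrite deriv_trunc_log1p.
have -> : (1 - (- 'X) ^+ m) * (E - c) - E = - c - (- 'X) ^+ m * (E - c) by ring.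
apply: dvdp_sub; last by rewrite dvdp_mulr // exprNn dvdp_mull.
by rewrite dvdpNr /c -mul_polyC dvdp_mull // (dvdp_trans _ XL) // dvdp_exp2l.
Qed.
End TruncatedLogExp.

Lemma mx_nilpotent_pow_size (F : fieldType) n (A : 'M[F]_n) k :
  A ^+ k = 0 -> A ^+ n = 0.
Proof.
case: n A => [A _ | n A Ak0]; first exact: flatmx0.
(* mxminpoly A is X^j up to a scalar, with j <= n.+1 as it divides char_poly A. *)
have : mxminpoly A %| ('X - 0%:P) ^+ k.
  by apply: mxminpoly_min; rewrite subr0 rmorphXn /= horner_mx_X.
case/dvdp_exp_XsubCP => j _ /eqpP[[c1 c2] /andP[c1_neq0 c2_neq0] /= min_eq].
rewrite subr0 in min_eq.
have le_jn : (j <= n.+1)%N.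
  have := dvdp_leq (monic_neq0 (char_poly_monic A)) (mxminpoly_dvd_char A).
  by rewrite size_char_poly -(size_scale _ c1_neq0) min_eq size_scale // size_polyXn.
have Aj0 : A ^+ j = 0.
  have /eqP := congr1 (horner_mx A) min_eq.
  rewrite !linearZ /= mx_root_minpoly scaler0 rmorphXn /= horner_mx_X eq_sym.
  by rewrite scaler_eq0 (negPf c2_neq0) => /eqP.
have -> : A ^+ n.+1 = A ^+ (n.+1 - j) * A ^+ j by rewrite -exprD subnK.
by rewrite Aj0 mulr0.
Qed.

Section UnipotentLog.
Variable R : realType.

Lemma matlog_horner n (M : 'M[R]_n.+1) :
  matlog M = horner_mx (M - 1%:M) (trunc_log1p R n.+1).
Proof.
rewrite /matlog /trunc_log1p linear_sum; apply: eq_bigr => k _.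
by rewrite linearZ /= rmorphXn /= horner_mx_X.
Qed.

Lemma matlog_nilpotent n (M : 'M[R]_n) :
  (M - 1%:M) ^+ n = 0 -> matlog M ^+ n = 0.
Proof.
case: n M => [M _ | n M U_nil]; first exact: flatmx0.
rewrite matlog_horner; have /dvdpP[q ->] := X_dvdp_trunc_log1p R n.+1.
by rewrite -rmorphXn exprMn rmorphM /= !rmorphXn /= horner_mx_X U_nil mulr0.
Qed.

Lemma exp_matlog n (M : 'M[R]_n) K : (n <= K)%N ->
  (M - 1%:M) ^+ n = 0 -> \sum_(k < K.+1) (k`!%:R)^-1 *: matlog M ^+ k = M.
Proof.
case: n M => [M _ _ | n M le_nK U_nil]; first by rewrite [LHS]flatmx0 [RHS]flatmx0.
have /dvdpP[q exp_log] := trunc_exp_log1p R le_nK.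
have -> : \sum_(k < K.+1) (k`!%:R)^-1 *: matlog M ^+ k =
          horner_mx (M - 1%:M) (trunc_exp K (trunc_log1p R n.+1)).
  rewrite /trunc_exp linear_sum; apply: eq_bigr => k _.
  by rewrite linearZ /= rmorphXn /= matlog_horner.
rewrite -(subrK (1 + 'X) (trunc_exp _ _)) exp_log rmorphD rmorphM /= rmorphXn /=.
rewrite horner_mx_X exprS U_nil !mulr0 add0r rmorphD /= horner_mx_X rmorph1.
by rewrite addrC subrK.
Qed.

Lemma matlog_comm m (M P : 'M[R]_m) :
  GRing.comm P M -> GRing.comm P (matlog M).
Proof.
move=> PM; have PU : GRing.comm P (M - 1%:M) by apply: commrB => //; apply: commr1.
apply: commr_sum => k _; rewrite /GRing.comm -!mulmxE -scalemxAl -scalemxAr.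
by rewrite !mulmxE (commrX k PU).
Qed.

End UnipotentLog.

Lemma mulmx1_invmx (R : comUnitRingType) m (A B : 'M[R]_m) :
  A *m B = 1%:M -> invmx A = B.
Proof.
move=> AB; have [A_unit _] := mulmx1_unit AB.
by rewrite -[invmx A]mulmx1 -AB mulmxA mulVmx ?mul1mx.
Qed.

Lemma unitmxX (R : comUnitRingType) m (A : 'M[R]_m) k :
  A \in unitmx -> A ^+ k \in unitmx.
Proof.
move=> A_unit; elim: k => [|k IH]; first by rewrite unitmx1.
by rewrite exprS -mulmxE unitmx_mul A_unit.
Qed.

Section ExtendedNilpotent.
Variables (R : realType) (n : nat).
Implicit Types (N P : 'M[R]_n) (v B : 'cV[R]_n).

Definition ext_mx N v : 'M[R]_(n + 1) := block_mx N (N *m v) 0 0.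

Lemma ext_mxXS N v k : ext_mx N v ^+ k.+1 = ext_mx (N ^+ k.+1) v.
Proof.
elim: k => [|k IH]; first by rewrite !expr1.
rewrite exprS IH -mulmxE /ext_mx mulmx_block.
by rewrite !mulmx0 !mul0mx !addr0 mulmxA mulmxE -exprS.
Qed.

Lemma ext_mx_nilpotent N v : N ^+ n = 0 -> nilpotent_mx (ext_mx N v).
Proof.
move=> N_nil; exists n.+1.
by rewrite ext_mxXS exprSr N_nil mul0r /ext_mx mul0mx block_mx0.
Qed.

Lemma matexp_ext_mx N v E : \sum_(k < (n + 1).+1) (k`!%:R)^-1 *: N ^+ k = E ->
  matexp (ext_mx N v) = block_mx E ((E - 1%:M) *m v) 0 1%:M.
Proof.
move=> <-.
have ext_sum (I : Type) (r : seq I) (c : I -> R) (A : I -> 'M[R]_n) :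
    \sum_(i <- r) c i *: ext_mx (A i) v = ext_mx (\sum_(i <- r) c i *: A i) v.
  elim: r => [|x r IH]; first by rewrite !big_nil /ext_mx mul0mx block_mx0.
  rewrite !big_cons IH /ext_mx scale_block_mx add_block_mx !scaler0 !addr0.
  by rewrite mulmxDl scalemxAl.
rewrite /matexp big_ord_recl /= expr0 fact0 invr1 scale1r.
under eq_bigr do rewrite ext_mxXS.
rewrite ext_sum big_ord_recl /= expr0 fact0 invr1 scale1r.
rewrite /bump /=; under eq_bigr do rewrite add1n.
rewrite -!idmxE addrAC subrr add0r (scalar_mx_block n 1 1) /ext_mx.
by rewrite add_block_mx !add0r addr0.
Qed.

Lemma conj_ext_mx P B N v : P \in unitmx -> P *m N = N *m P ->
  block_mx P B 0 1%:M *m ext_mx N v *m invmx (block_mx P B 0 1%:M) =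
  ext_mx N (P *m v - B).
Proof.
move=> P_unit PN; set Q := invmx P.
have PQ : P *m Q = 1%:M by rewrite mulmxV.
have -> : invmx (block_mx P B 0 1%:M) = block_mx Q (- (Q *m B)) 0 1%:M.
  apply: mulmx1_invmx; rewrite mulmx_block !mul0mx !mulmx0 !mul1mx !addr0 !add0r.
  by rewrite mulmxN mulmxA PQ mul1mx mulmx1 addNr -scalar_mx_block.
rewrite /ext_mx !mulmx_block !mulmx0 !mul0mx !addr0 !mulmx1.
congr block_mx; [by rewrite PN -mulmxA PQ mulmx1 | | exact: mul0mx |].
  by rewrite PN mulmxBr mulmxN addrC !mulmxA PN -(mulmxA N P Q) PQ mulmx1.
by rewrite mul0mx addr0.
Qed.

End ExtendedNilpotent.

Lemma Ad_ray (R : realType) m (g A : 'M[R]_m) :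
  Ad g (ray A) = ray (g *m A *m invmx g).
Proof.
apply/seteqP; split => X /=.
  by case=> _ [t t_ge0 <-] <-; exists t => //; rewrite scalemxAl scalemxAr.
case=> t t_ge0 <-; exists (t *: A); first by exists t.
by rewrite scalemxAl scalemxAr.
Qed.

Lemma ray_cone_gen1 (R : realType) m (A : 'M[R]_m) : ray A = cone_gen [set A].
Proof.
apply/seteqP; split => X /=.
  case=> t t_ge0 <-; exists 1%N, (fun _ => t), (fun _ => A).
  by rewrite big_ord1.
case=> p [c [v [cv ->]]]; exists (\sum_(i < p) c i).
  by apply: sumr_ge0 => i _; case: (cv i).
by rewrite scaler_suml; apply: eq_bigr => i _; case: (cv i) => _ ->.
Qed.

Section IntegralMatrices.
Variable R : archiNumDomainType.

Definition int_mx {m p} (A : 'M[R]_(m, p)) := forall i j, A i j \is a Num.int.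

Lemma int_mxB m p (A B : 'M[R]_(m, p)) : int_mx A -> int_mx B -> int_mx (A - B).
Proof. by move=> Aint Bint i j; rewrite !mxE rpredB. Qed.

Lemma int_mxM m p q (A : 'M[R]_(m, p)) (B : 'M[R]_(p, q)) :
  int_mx A -> int_mx B -> int_mx (A *m B).
Proof. by move=> Aint Bint i j; rewrite mxE rpred_sum // => k _; apply: rpredM. Qed.

Lemma int_mx1 m : int_mx (1%:M : 'M[R]_m).
Proof. by move=> i j; rewrite mxE rpred_nat. Qed.

Lemma int_mxX m (A : 'M[R]_m) k : int_mx A -> int_mx (A ^+ k).
Proof.
move=> Aint; elim: k => [|k IH]; first exact: int_mx1.
by rewrite exprS; apply: int_mxM.
Qed.

Lemma int_mx_intr m p (B : 'M[int]_(m, p)) : int_mx (map_mx (fun z => z%:~R) B).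
Proof. by move=> i j; rewrite mxE intr_int. Qed.

Lemma int_mxP m p (A : 'M[R]_(m, p)) :
  int_mx A -> exists B : 'M[int]_(m, p), A = map_mx (fun z => z%:~R) B.
Proof.
move=> Aint; exists (map_mx Num.floor A).
by apply/matrixP => i j; rewrite !mxE floorK.
Qed.

End IntegralMatrices.

Section IntegerPowers.
Variables (R : realType) (m : nat) (M : 'M[R]_m).
Hypothesis M_unit : M \in unitmx.

Lemma powz_unitmx k : powz M k \in unitmx.
Proof. by case: k => j; apply: unitmxX; rewrite ?unitmx_inv. Qed.

Lemma powz_comm k : GRing.comm (powz M k) M.
Proof.
have MV : GRing.comm M (invmx M) by rewrite /GRing.comm -!mulmxE mulmxV ?mulVmx.
by case: k => j; apply/commr_sym/commrX.
Qed.

Lemma int_mx_powz k : int_mx M -> int_mx (invmx M) -> int_mx (powz M k).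
Proof. by move=> Mint Vint; case: k => j; apply: int_mxX. Qed.

End IntegerPowers.

Lemma map_ratr_intr (R : numFieldType) m p (B : 'M[int]_(m, p)) :
  map_mx (fun q : rat => (ratr q : R)) (map_mx (fun z => z%:~R) B) =
  map_mx (fun z => z%:~R) B.
Proof. by apply/matrixP => i j; rewrite !mxE ratr_int. Qed.

Section IntegralUnipotent.
Variables (R : realType) (n : nat) (T : 'M[int]_n).

Lemma TR_unipotent :
  (exists k, (T - 1%:M) ^+ k = 0) -> (TR R T - 1%:M) ^+ n = 0.
Proof.
case=> k Uk; apply: (@mx_nilpotent_pow_size _ _ _ k).
have -> : TR R T - 1%:M = TR R (T - 1%:M).
  by apply/matrixP => i j; rewrite !mxE rmorphB /= rmorphMn rmorph1.
by rewrite /TR -rmorphXn /= Uk map_mx0.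
Qed.

Lemma invmx_TR : T \in unitmx -> invmx (TR R T) = TR R (invmx T).
Proof.
by move=> T_unit; apply: mulmx1_invmx; rewrite -map_mxM mulmxV // map_mx1.
Qed.

Lemma TR_unitmx : T \in unitmx -> TR R T \in unitmx.
Proof.
move=> T_unit; have [] // := @mulmx1_unit _ _ (TR R T) (TR R (invmx T)).
by rewrite -map_mxM mulmxV // map_mx1.
Qed.

Lemma logT_rat : exists Nq : 'M[rat]_n,
  logT R T = map_mx (fun q : rat => (ratr q : R)) Nq.
Proof.
exists (\sum_(1 <= k < n.+1) (((-1) ^+ k.+1) / k%:R) *:
          (map_mx (fun z => z%:~R) T - 1%:M) ^+ k).
rewrite /logT /matlog map_mx_sum; apply: eq_bigr => k _.
rewrite map_mxZ rmorphXn /= map_mxB map_mx1 map_ratr_intr.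
by rewrite rmorphM /= fmorphV rmorphXn rmorphN1 rmorph_nat.
Qed.

End IntegralUnipotent.

Section SigmaCones.
Variables (R : realType) (n : nat) (T : 'M[int]_n).
Hypothesis T_unit : T \in unitmx.
Hypothesis T_unipotent : exists k, (T - 1%:M) ^+ k = 0.
Local Notation ratmx := (map_mx (fun q : rat => (ratr q : R))).

Lemma Gamma'_matexp_ext_logT v :
  int_mx ((TR R T - 1%:M) *m v) -> Gamma' T (matexp (ext_mx (logT R T) v)).
Proof.
case/int_mxP => b bE; exists 1, b.
have exp_logT := exp_matlog (leq_addr 1 n) (TR_unipotent R T_unipotent).
by rewrite -bE (matexp_ext_mx _ exp_logT) /powz /= expr1.
Qed.

Lemma Sigma'_generator s : Sigma' T s ->
  exists Nq : 'M[rat]_(n + 1), s = ray (ratmx Nq) /\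
    nilpotent_mx (ratmx Nq) /\ Gamma' T (matexp (ratmx Nq)).
Proof.
case=> a [a_int ->]; have [Nq NqE] := logT_rat R T.
exists (block_mx Nq (Nq *m a) 0 0).
have -> : ratmx (block_mx Nq (Nq *m a) 0 0) = ext_mx (logT R T) (ratmx a).
  by rewrite map_block_mx map_mxM -NqE !map_mx0.
split=> //; split; last exact: Gamma'_matexp_ext_logT.
exact/ext_mx_nilpotent/matlog_nilpotent/(TR_unipotent R T_unipotent).
Qed.

Lemma Sigma'_Ad (s : set 'M[R]_(n + 1)) g :
  Sigma' T s -> Gamma' T g -> Sigma' T (Ad g s).
Proof.
case=> a [a_int ->] [k [b ->]]; set v := ratmx a; set B := map_mx _ b.
have TR_unit := TR_unitmx R T_unit.
set P := powz (TR R T) k; have PT : P *m TR R T = TR R T *m P := powz_comm TR_unit k.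
have [P0 P0E] : exists P0 : 'M[int]_n, P = map_mx (fun z => z%:~R) P0.
  apply/int_mxP/int_mx_powz; first exact: int_mx_intr.
  by rewrite invmx_TR //; apply: int_mx_intr.
rewrite Ad_ray conj_ext_mx ?powz_unitmx //; last exact: matlog_comm.
exists (map_mx (fun z => z%:~R) P0 *m a - map_mx (fun z => z%:~R) b).
rewrite map_mxB map_mxM !map_ratr_intr -P0E; split=> //.
have -> : (TR R T - 1%:M) *m (P *m v - B) =
          P *m ((TR R T - 1%:M) *m v) - (TR R T - 1%:M) *m B.
  by rewrite mulmxBr !mulmxA mulmxBl mulmxBr mulmx1 mul1mx PT.
apply: int_mxB; apply: int_mxM => //; rewrite ?P0E; try exact: int_mx_intr.
by apply: int_mxB; [exact: int_mx_intr | exact: int_mx1].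
Qed.

End SigmaCones.

Theorem mainTheorem2 (R : realType) (n : nat) (T : 'M[int]_n)
    (hTunit : T \in unitmx) (hTunip : exists k : nat, (T - 1%:M) ^+ k = 0) :
  (forall s : set 'M[R]_(n + 1), Sigma' T s ->
     (exists Nq : 'M[rat]_(n + 1),
        s = ray (map_mx (fun q : rat => (ratr q : R)) Nq) /\
        nilpotent_mx (map_mx (fun q : rat => (ratr q : R)) Nq) /\
        Gamma' T (matexp (map_mx (fun q : rat => (ratr q : R)) Nq))) /\
     (forall g, Gamma' T g -> Sigma' T (Ad g s))) /\
  strongly_compatible (@Gamma' R n T) (@Sigma' R n T).
Proof.
have Ad_stable := Sigma'_Ad hTunit.
split.
  by move=> s s_cone; split=> [|g]; [exact: Sigma'_generator | exact: Ad_stable].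
split=> [s s_cone g|s /(Sigma'_generator hTunip)[Nq [-> [Nq_nil Nq_exp]]]].
  exact: Ad_stable.
exists [set map_mx (fun q : rat => (ratr q : R)) Nq]; split; last exact: ray_cone_gen1.
by move=> _ ->; split; [exists Nq | split].
Qed.
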